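(* Let $\delta\in[0,1/2)\cup(1/2,1]$, $J\in\mathbb{R}$, and consider the dynamical system on $\mathbb{R}^3$ (coordinates indexed by $i\in\{A,B,C\}$) $$\dot{x}_i=(1-x_i)\,e^{2[-\delta Jx_{a(i)}-(1-\delta)Jx_{h(i)}+J/2]}-x_i\,e^{-2[-\delta Jx_{a(i)}-(1-\delta)Jx_{h(i)}+J/2]},\qquad i\in\{A,B,C\}.$$ The point $(1/2,1/2,1/2)^T$ is a fixed point for all $J$, and: (a) for $J<0$, there is a bifurcation at $J_c=-1$: the fixed point $(1/2,1/2,1/2)^T$ loses stability and two stable fixed points appear for $J<J_c$; (b) for $J>0$, there is a Hopf (Andronov–Hopf) bifurcation at $J_c=2$.
   Context: The three indices $A,B,C$ are arranged cyclically; $h(i)$ denotes the neighbour of $i$ in the clockwise direction and $a(i)$ the neighbour in the anticlockwise direction (e.g. $h(A)=B,h(B)=C,h(C)=A$, and $a=h^{-1}$). $J$ is the bifurcation parameter. *)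

From Stdlib Require Import Reals.
From Coquelicot Require Import Coquelicot.
Open Scope R_scope.

Inductive idx := IA | IB | IC.

Definition h (i : idx) : idx := match i with IA => IB | IB => IC | IC => IA end.
Definition a (i : idx) : idx := match i with IA => IC | IB => IA | IC => IB end.

Definition idx_eqb (i j : idx) : bool :=
  match i, j with IA, IA | IB, IB | IC, IC => true | _, _ => false end.

Definition state := idx -> R.

Definition expo (delta J : R) (x : state) (i : idx) : R :=
  - delta * J * x (a i) - (1 - delta) * J * x (h i) + J / 2.

Definition vf (delta J : R) (x : state) : state := fun i =>
  (1 - x i) * exp (2 * expo delta J x i) - x i * exp (- (2 * expo delta J x i)).

Definition is_fixed_point (F : state -> state) (x : state) : Prop :=
  forall i, F x i = 0.

Definition upd (x : state) (j : idx) (t : R) : state :=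
  fun k => if idx_eqb k j then t else x k.

Definition jac (F : state -> state) (x : state) : idx -> idx -> R :=
  fun i j => Derive (fun t => F (upd x j t) i) (x j).

Definition det3 (N : idx -> idx -> C) : C :=
  (N IA IA * (N IB IB * N IC IC - N IB IC * N IC IB)
   - N IA IB * (N IB IA * N IC IC - N IB IC * N IC IA)
   + N IA IC * (N IB IA * N IC IB - N IB IB * N IC IA))%C.

Definition charpoly (M : idx -> idx -> R) (lam : C) : C :=
  det3 (fun i j => ((if idx_eqb i j then lam else RtoC 0) - RtoC (M i j))%C).

Definition is_eigenvalue (M : idx -> idx -> R) (lam : C) : Prop :=
  charpoly M lam = RtoC 0.

Definition lin_stable (F : state -> state) (x : state) : Prop :=
  is_fixed_point F x /\
  forall lam, is_eigenvalue (jac F x) lam -> Re lam < 0.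

Definition lin_unstable (F : state -> state) (x : state) : Prop :=
  is_fixed_point F x /\
  exists lam, is_eigenvalue (jac F x) lam /\ 0 < Re lam.

Definition hopf_bifurcation (F : R -> state -> state) (x0 : R -> state)
  (Jc : R) : Prop :=
  (forall J, is_fixed_point (F J) (x0 J)) /\
  exists w : R, w <> 0 /\
    is_eigenvalue (jac (F Jc) (x0 Jc)) (0, w) /\
    is_eigenvalue (jac (F Jc) (x0 Jc)) (0, - w) /\
    (forall mu, is_eigenvalue (jac (F Jc) (x0 Jc)) mu -> Re mu = 0 ->
       mu = (0, w) \/ mu = (0, - w)) /\
    exists eps : R, 0 < eps /\
    exists lam : R -> C,
      lam Jc = (0, w) /\
      (forall J, Rabs (J - Jc) < eps -> is_eigenvalue (jac (F J) (x0 J)) (lam J)) /\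
      ex_derive (fun J => Re (lam J)) Jc /\
      Derive (fun J => Re (lam J)) Jc <> 0.

Definition center : state := fun _ => 1 / 2.

(* Every fixed point is a zero of the one-coordinate rate
   [(1 - x) e^(2E) - x e^(-2E)], which forces [x - 1/2 = tanh(2E)/2]; since
   [tanh u < u], the fixed-point equations contract around the centre in the
   sup norm as long as [|J| <= 1], so the centre is the only fixed point.
   The Jacobian at a symmetric point [(c,c,c)] is circulant, with eigenvalues
   [d + p + r] and the conjugate pair [d - (p+r)/2 +- i (sqrt 3 / 2) (r - p)];
   at the centre these are [-2 (1 + J)] and [J - 2 +- i sqrt 3 (2 delta - 1) J],
   which gives the loss of stability at [J = -1] and the transversal crossing
   of a non-real pair at [J = 2].  For [J < -1] the intermediate value theorem
   produces a symmetric fixed point [c > 1/2], its mirror image [1 - c] is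
   another one, and [sinh t > t] shows that both are stable. *)

From Stdlib Require Import Reals Lra Nsatz FunctionalExtensionality.
From Coquelicot Require Import Coquelicot.
Open Scope R_scope.

Lemma pos_of_deriv_pos (f f' : R -> R) :
  f 0 = 0 -> (forall t, is_derive f t (f' t)) -> (forall t, 0 < t -> 0 < f' t) ->
  forall t, 0 < t -> 0 < f t.
Proof.
  intros H0 Hf Hf' t Ht.
  destruct (MVT_cor2 f f' 0 t Ht) as [c [Hc Hct]].
  { intros c _; apply is_derive_Reals, Hf. }
  rewrite H0 in Hc.
  assert (0 < f' c * (t - 0)) by (apply Rmult_lt_0_compat; [apply Hf'|]; lra).
  lra.
Qed.

Lemma sinh_gt_id t : 0 < t -> 2 * t < exp t - exp (- t).
Proof.
  intro Ht; apply Rlt_0_minus.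
  apply (pos_of_deriv_pos (fun t => exp t - exp (- t) - 2 * t)
                          (fun t => exp t + exp (- t) - 2)); [| | | exact Ht].
  - rewrite Ropp_0, exp_0; ring.
  - intro s; auto_derive; [easy | ring].
  - intros s Hs.
    assert (1 < exp s) by (rewrite <- exp_0; apply exp_increasing; lra).
    rewrite exp_Ropp.
    replace (exp s + / exp s - 2) with ((exp s - 1) ^ 2 / exp s) by (field; lra).
    apply Rdiv_lt_0_compat; nra.
Qed.

Lemma tanh_lt_id t : 0 < t -> exp t - exp (- t) < t * (exp t + exp (- t)).
Proof.
  intro Ht; apply Rlt_0_minus.
  apply (pos_of_deriv_pos (fun t => t * (exp t + exp (- t)) - (exp t - exp (- t)))
                          (fun t => t * (exp t - exp (- t)))); [| | | exact Ht].
  - rewrite Ropp_0, exp_0; ring.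
  - intro s; auto_derive; [easy | ring].
  - intros s Hs; apply Rmult_lt_0_compat; [exact Hs|].
    pose proof (sinh_gt_id s Hs); lra.
Qed.

Definition circ (d p r : R) : idx -> idx -> R := fun i j =>
  if idx_eqb i j then d else if idx_eqb j (a i) then p else r.

Definition circ_pair (d p r : R) : C := (d - (p + r) / 2, sqrt 3 / 2 * (r - p)).

Lemma charpoly_circ d p r l :
  charpoly (circ d p r) l =
  ((l - RtoC (d + p + r)) * (l - circ_pair d p r) * (l - Cconj (circ_pair d p r)))%C.
Proof.
  assert (s3 : sqrt 3 * sqrt 3 = 3) by (apply sqrt_sqrt; lra).
  assert (i2 : / 2 * 2 = 1) by (apply Rinv_l; lra).
  destruct l as [x y]; unfold charpoly, det3, circ, circ_pair, Cconj, Rdiv; simpl.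
  unfold Cminus, Cmult, Cplus, Copp, RtoC; simpl.
  generalize (sqrt 3) (/ 2) s3 i2; intros s t Hs Ht.
  apply injective_projections; simpl; nsatz.
Qed.

Lemma is_eigenvalue_circ d p r l :
  is_eigenvalue (circ d p r) l <->
  l = RtoC (d + p + r) \/ l = circ_pair d p r \/ l = Cconj (circ_pair d p r).
Proof.
  unfold is_eigenvalue; rewrite charpoly_circ; split.
  - intro H.
    destruct (Ceq_dec l (RtoC (d + p + r))) as [|H0]; [now left|].
    destruct (Ceq_dec l (circ_pair d p r)) as [|H1]; [now right; left|].
    destruct (Ceq_dec l (Cconj (circ_pair d p r))) as [|H2]; [now right; right|].
    exfalso; revert H.
    repeat apply Cmult_neq_0; now apply Cminus_eq_contra.
  - intros [-> | [-> | ->]]; ring.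
Qed.

Lemma lin_stable_circ F x d p r :
  is_fixed_point F x -> jac F x = circ d p r ->
  d + p + r < 0 -> d - (p + r) / 2 < 0 -> lin_stable F x.
Proof.
  intros Hfix Hjac H0 H1; split; [exact Hfix|].
  intros l; rewrite Hjac, is_eigenvalue_circ.
  intros [-> | [-> | ->]]; simpl; lra.
Qed.

Lemma lin_unstable_circ F x d p r :
  is_fixed_point F x -> jac F x = circ d p r ->
  0 < d + p + r \/ 0 < d - (p + r) / 2 -> lin_unstable F x.
Proof.
  intros Hfix Hjac [H | H]; split; try exact Hfix; rewrite Hjac.
  - exists (RtoC (d + p + r)); split; [apply is_eigenvalue_circ; now left | exact H].
  - exists (circ_pair d p r); split; [apply is_eigenvalue_circ; now right; left | exact H].
Qed.

(* [vf delta J x i] is [rate (x i) (expo delta J x i)]; [rate_dx] and [rate_dE]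
   are the partial derivatives of [rate]. *)
Definition rate (x E : R) : R := (1 - x) * exp (2 * E) - x * exp (- (2 * E)).
Definition rate_dx (E : R) : R := - (exp (2 * E) + exp (- (2 * E))).
Definition rate_dE (x E : R) : R := 2 * ((1 - x) * exp (2 * E) + x * exp (- (2 * E))).

Lemma rate_reflect x E : rate (1 - x) (- E) = - rate x E.
Proof. unfold rate; rewrite Ropp_mult_distr_r_reverse, Ropp_involutive; ring. Qed.

Lemma rate_factor x E : rate x E = ((1 - x) * exp (4 * E) - x) * exp (- (2 * E)).
Proof.
  unfold rate.
  replace (exp (4 * E)) with (exp (2 * E) * exp (2 * E)) by (rewrite <- exp_plus; f_equal; ring).
  rewrite exp_Ropp; field; apply Rgt_not_eq, exp_pos.
Qed.

Lemma rate_dx_neg E : rate_dx E < 0.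
Proof. unfold rate_dx; pose proof (exp_pos (2 * E)); pose proof (exp_pos (- (2 * E))); lra. Qed.

Lemma rate_dE_root x E : rate x E = 0 -> rate_dE x E = 4 * (x * (1 - x)) * - rate_dx E.
Proof.
  unfold rate, rate_dE, rate_dx; intro H.
  replace (2 * ((1 - x) * exp (2 * E) + x * exp (- (2 * E))))
    with (4 * (x * (1 - x)) * (exp (2 * E) + exp (- (2 * E)))
          + 2 * (1 - 2 * x) * ((1 - x) * exp (2 * E) - x * exp (- (2 * E)))) by ring.
  rewrite H; ring.
Qed.

Lemma rate_root_pos_contract x E : rate x E = 0 -> 0 < E -> Rabs (x - 1 / 2) < E.
Proof.
  unfold rate; intros H HE.
  pose proof (tanh_lt_id (2 * E) ltac:(lra)) as Htanh.
  assert (Hv : exp (- (2 * E)) < exp (2 * E)) by (apply exp_increasing; lra).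
  pose proof (exp_pos (- (2 * E))).
  assert (Hx : x * (exp (2 * E) + exp (- (2 * E))) = exp (2 * E)) by lra.
  rewrite Rabs_pos_eq; nra.
Qed.

Lemma rate_root_contract x E : rate x E = 0 -> x <> 1 / 2 -> Rabs (x - 1 / 2) < Rabs E.
Proof.
  intros H Hx; destruct (Rtotal_order E 0) as [HE | [HE | HE]].
  - rewrite (Rabs_left E HE).
    replace (x - 1 / 2) with (- ((1 - x) - 1 / 2)) by lra.
    rewrite Rabs_Ropp; apply rate_root_pos_contract; [rewrite rate_reflect, H; ring | lra].
  - subst E; unfold rate in H; rewrite Rmult_0_r, Ropp_0, exp_0 in H; lra.
  - rewrite (Rabs_pos_eq E) by lra; now apply rate_root_pos_contract.
Qed.

Definition diag (c : R) : state := fun _ => c.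

Lemma vf_diag delta J c i : vf delta J (diag c) i = rate c (J * (1 / 2 - c)).
Proof.
  unfold vf, rate, expo, diag.
  now replace (- delta * J * c - (1 - delta) * J * c + J / 2) with (J * (1 / 2 - c)) by field.
Qed.

Lemma is_fixed_point_diag delta J c :
  is_fixed_point (vf delta J) (diag c) <-> rate c (J * (1 / 2 - c)) = 0.
Proof.
  split; [intro H; rewrite <- (vf_diag delta J c IA); apply H |].
  intros H i; now rewrite vf_diag.
Qed.

Lemma jac_vf_diag delta J c :
  jac (vf delta J) (diag c) =
  circ (rate_dx (J * (1 / 2 - c))) (- delta * J * rate_dE c (J * (1 / 2 - c)))
       (- (1 - delta) * J * rate_dE c (J * (1 / 2 - c))).
Proof.
  assert (E0 : - delta * J * c - (1 - delta) * J * c + J / 2 = J * (1 / 2 - c)) by field.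
  assert (E1 : - delta * J * c + - ((1 - delta) * J * c) + J / 2 = J * (1 / 2 - c)) by field.
  apply functional_extensionality; intro i; apply functional_extensionality; intro j.
  unfold jac; apply is_derive_unique.
  destruct i, j; unfold vf, expo, upd, diag, circ, rate_dx, rate_dE; cbn [idx_eqb a h];
    auto_derive; auto; rewrite ?E0, ?E1; ring.
Qed.

Section DiagonalFixedPoint.

Variables (delta J c : R).
Hypothesis Hfix : is_fixed_point (vf delta J) (diag c).

Lemma lin_stable_diag :
  0 < 1 + 4 * J * (c * (1 - c)) -> 0 < 1 - 2 * J * (c * (1 - c)) ->
  lin_stable (vf delta J) (diag c).
Proof.
  pose proof (rate_dE_root _ _ (proj1 (is_fixed_point_diag _ _ _) Hfix)) as HdE.
  pose proof (rate_dx_neg (J * (1 / 2 - c))) as Hdx.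
  intros H0 H1; eapply lin_stable_circ; [exact Hfix | apply jac_vf_diag | |]; rewrite HdE; nra.
Qed.

Lemma lin_unstable_diag :
  1 + 4 * J * (c * (1 - c)) < 0 \/ 1 - 2 * J * (c * (1 - c)) < 0 ->
  lin_unstable (vf delta J) (diag c).
Proof.
  pose proof (rate_dE_root _ _ (proj1 (is_fixed_point_diag _ _ _) Hfix)) as HdE.
  pose proof (rate_dx_neg (J * (1 / 2 - c))) as Hdx.
  intros H; eapply lin_unstable_circ; [exact Hfix | apply jac_vf_diag |]; rewrite HdE.
  destruct H; [left | right]; nra.
Qed.

End DiagonalFixedPoint.

Lemma center_fixed delta J : is_fixed_point (vf delta J) center.
Proof.
  apply (is_fixed_point_diag delta J (1 / 2)); unfold rate.
  replace (J * (1 / 2 - 1 / 2)) with 0 by field.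
  rewrite Rmult_0_r, Ropp_0, exp_0; field.
Qed.

Lemma center_stable delta J : -1 < J < 2 -> lin_stable (vf delta J) center.
Proof. intro HJ; apply (lin_stable_diag delta J (1 / 2) (center_fixed delta J)); lra. Qed.

Lemma center_unstable delta J : J < -1 \/ 2 < J -> lin_unstable (vf delta J) center.
Proof. intro HJ; apply (lin_unstable_diag delta J (1 / 2) (center_fixed delta J)); lra. Qed.

Lemma jac_vf_center delta J :
  jac (vf delta J) center = circ (-2) (-2 * delta * J) (-2 * (1 - delta) * J).
Proof.
  change center with (diag (1 / 2)); rewrite jac_vf_diag; unfold rate_dx, rate_dE.
  replace (J * (1 / 2 - 1 / 2)) with 0 by field.
  rewrite Rmult_0_r, Ropp_0, exp_0; f_equal; field.
Qed.

Lemma center_hopf delta : delta <> 1 / 2 ->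
  hopf_bifurcation (fun J => vf delta J) (fun _ => center) 2.
Proof.
  intro Hdelta.
  set (lam J := circ_pair (-2) (-2 * delta * J) (-2 * (1 - delta) * J)).
  set (w := Im (lam 2)).
  assert (Hlam2 : lam 2 = (0, w)) by (apply injective_projections; simpl; [field | reflexivity]).
  assert (Hw : w <> 0).
  { assert (0 < sqrt 3) by (apply sqrt_lt_R0; lra).
    unfold w, lam, circ_pair; simpl; intro H0; nra. }
  assert (Hre : is_derive (fun J => Re (lam J)) 2 1).
  { unfold lam, circ_pair; simpl; auto_derive; [easy | field]. }
  split; [intro; apply center_fixed |].
  exists w; split; [exact Hw |].
  rewrite jac_vf_center; repeat split.
  - apply is_eigenvalue_circ; right; left; fold (lam 2); now rewrite Hlam2.
  - apply is_eigenvalue_circ; right; right; fold (lam 2); now rewrite Hlam2.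
  - intros mu Hmu H0; apply is_eigenvalue_circ in Hmu.
    destruct Hmu as [-> | [-> | ->]]; [simpl in H0; lra | left | right];
      fold (lam 2); now rewrite Hlam2.
  - exists 1; split; [lra |]; exists lam; repeat split.
    + exact Hlam2.
    + intros J _; rewrite jac_vf_center; apply is_eigenvalue_circ; now right; left.
    + now exists 1.
    + replace (Derive _ 2) with 1 by (symmetry; now apply is_derive_unique); apply R1_neq_R0.
Qed.

Lemma idx_argmax (f : idx -> R) : exists j, forall i, f i <= f j.
Proof.
  destruct (Rle_dec (f IA) (f IB)), (Rle_dec (f IB) (f IC)), (Rle_dec (f IA) (f IC));
    first [exists IA; intros []; lra | exists IB; intros []; lra | exists IC; intros []; lra].
Qed.

Lemma Rabs_expo_le delta J x i m :
  0 <= delta <= 1 -> Rabs J <= 1 -> (forall k, Rabs (x k - 1 / 2) <= m) ->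
  Rabs (expo delta J x i) <= m.
Proof.
  intros Hd HJ Hm.
  assert (Ha := Hm (a i)); assert (Hh := Hm (h i)).
  apply Rabs_le_between in HJ, Ha, Hh.
  replace (expo delta J x i)
    with (- J * (delta * (x (a i) - 1 / 2) + (1 - delta) * (x (h i) - 1 / 2)))
    by (unfold expo; field).
  assert (Hs : - m <= delta * (x (a i) - 1 / 2) + (1 - delta) * (x (h i) - 1 / 2) <= m) by nra.
  apply Rabs_le; nra.
Qed.

Lemma fixed_point_vf_eq_center delta J x :
  0 <= delta <= 1 -> Rabs J <= 1 -> is_fixed_point (vf delta J) x -> forall i, x i = 1 / 2.
Proof.
  intros Hd HJ Hfix.
  destruct (idx_argmax (fun i => Rabs (x i - 1 / 2))) as [j Hj]; cbv beta in Hj.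
  assert (Hxj : x j = 1 / 2).
  { destruct (Req_dec (x j) (1 / 2)) as [| Hne]; [assumption | exfalso].
    pose proof (rate_root_contract _ _ (Hfix j) Hne).
    pose proof (Rabs_expo_le delta J x j _ Hd HJ Hj); lra. }
  intro i; specialize (Hj i).
  rewrite Hxj, Rminus_diag, Rabs_R0 in Hj.
  pose proof (Rabs_pos (x i - 1 / 2)).
  assert (Rabs (x i - 1 / 2) = 0) as H0%Rabs_eq_0 by lra; lra.
Qed.

Lemma diag_root_exists J : J < -1 -> exists c, 1 / 2 < c < 1 /\ rate c (J * (1 / 2 - c)) = 0.
Proof.
  intro HJ.
  set (g c := c - (1 - c) * exp (4 * (J * (1 / 2 - c)))).
  set (Jinv := / J).
  assert (Hi : Jinv * J = 1) by (unfold Jinv; field; lra).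
  assert (Hi0 : -1 < Jinv < 0) by (split; nra).
  (* the exponent of [g] at [c0] is [-J - 1], and [exp (-J - 1) > -J] *)
  set (c0 := 3 / 4 + Jinv / 4).
  assert (Hg0 : g c0 < 0).
  { unfold g; replace (4 * (J * (1 / 2 - c0))) with (- J - 1) by (unfold c0; lra).
    pose proof (exp_ineq1 (- J - 1) ltac:(lra)).
    assert (c0 < (1 - c0) * - J) by (unfold c0; nra).
    unfold c0 in *; nra. }
  assert (Hg1 : 0 < g 1) by (unfold g; lra).
  assert (Hcont : continuity g).
  { intro t; apply continuity_pt_filterlim, (ex_derive_continuous g).
    unfold g; auto_derive; auto. }
  destruct (IVT g c0 1 Hcont ltac:(unfold c0; lra) Hg0 Hg1) as [c [Hc Hgc]].
  assert (c <> 1) by (intros ->; lra).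
  exists c; split; [unfold c0 in Hc; lra |].
  rewrite rate_factor; unfold g in Hgc.
  replace ((1 - c) * exp (4 * (J * (1 / 2 - c))) - c) with 0 by lra; ring.
Qed.

Lemma diag_root_margin J c :
  J < 0 -> 1 / 2 < c < 1 -> rate c (J * (1 / 2 - c)) = 0 -> 0 < 1 + 4 * J * (c * (1 - c)).
Proof.
  intros HJ Hc H; rewrite rate_factor in H.
  set (t := 4 * (J * (1 / 2 - c))) in H.
  assert (Ht : 0 < t) by (unfold t; nra).
  assert (Hs : exp t = c / (1 - c)).
  { apply Rmult_integral in H as [H | H].
    - field_simplify_eq; lra.
    - pose proof (exp_pos (- (2 * (J * (1 / 2 - c))))); lra. }
  (* with [exp t = c / (1 - c)], [sinh t > t] is exactly the claimed margin *)
  pose proof (sinh_gt_id t Ht) as Hsinh.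
  rewrite exp_Ropp, Hs in Hsinh.
  replace (c / (1 - c) - / (c / (1 - c))) with ((2 * c - 1) / (c * (1 - c))) in Hsinh
    by (field; lra).
  apply (Rmult_lt_compat_r (c * (1 - c))) in Hsinh; [| nra].
  replace ((2 * c - 1) / (c * (1 - c)) * (c * (1 - c))) with (2 * c - 1) in Hsinh by (field; lra).
  unfold t in Hsinh; nra.
Qed.

Lemma diag_bistable delta J : J < -1 -> exists c, 1 / 2 < c < 1 /\
  lin_stable (vf delta J) (diag c) /\ lin_stable (vf delta J) (diag (1 - c)).
Proof.
  intro HJ; destruct (diag_root_exists J HJ) as [c [Hc Hroot]].
  pose proof (diag_root_margin J c ltac:(lra) Hc Hroot) as Hmargin.
  assert (Hq : 0 < c * (1 - c)) by nra.
  exists c; split; [exact Hc | split]; apply lin_stable_diag.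
  - now apply is_fixed_point_diag.
  - exact Hmargin.
  - nra.
  - apply is_fixed_point_diag.
    replace (J * (1 / 2 - (1 - c))) with (- (J * (1 / 2 - c))) by field.
    rewrite rate_reflect, Hroot; ring.
  - replace ((1 - c) * (1 - (1 - c))) with (c * (1 - c)) by ring; exact Hmargin.
  - replace ((1 - c) * (1 - (1 - c))) with (c * (1 - c)) by ring; nra.
Qed.

Theorem proposition1 (delta : R)
  (Hdelta : (0 <= delta < 1 / 2) \/ (1 / 2 < delta <= 1)) :
  (* (1/2,1/2,1/2) is a fixed point for all J *)
  (forall J : R, is_fixed_point (vf delta J) center) /\
  (* (a) bifurcation at J_c = -1 for J < 0 *)
  ((forall J : R, -1 < J < 0 -> lin_stable (vf delta J) center) /\
   (forall J : R, -1 <= J < 0 ->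
      forall x : state, is_fixed_point (vf delta J) x -> forall i, x i = 1 / 2) /\
   (forall J : R, J < -1 ->
      lin_unstable (vf delta J) center /\
      exists x1 x2 : state,
        x1 <> x2 /\ x1 <> center /\ x2 <> center /\
        lin_stable (vf delta J) x1 /\ lin_stable (vf delta J) x2)) /\
  (* (b) Hopf bifurcation at J_c = 2 for J > 0 *)
  ((forall J : R, 0 < J < 2 -> lin_stable (vf delta J) center) /\
   (forall J : R, 2 < J -> lin_unstable (vf delta J) center) /\
   hopf_bifurcation (fun J => vf delta J) (fun _ => center) 2).
Proof.
  split; [exact (center_fixed delta) |].
  split; [split; [| split] | split; [| split]].
  - intros J HJ; apply center_stable; lra.
  - intros J HJ x; apply fixed_point_vf_eq_center; [lra | apply Rabs_le; lra].
  - intros J HJ; split; [apply center_unstable; lra |].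
    destruct (diag_bistable delta J HJ) as [c [Hc [Hstable1 Hstable2]]].
    exists (diag c), (diag (1 - c)).
    split; [| split; [| split; [| split]]]; try assumption; intro Heq;
      apply (f_equal (fun x : state => x IA)) in Heq; unfold diag, center in Heq; lra.
  - intros J HJ; apply center_stable; lra.
  - intros J HJ; apply center_unstable; lra.
  - apply center_hopf; lra.
Qed.
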